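(* Let $d$ be a compatible metric on the Cantor space $\mathbf{C}$ and let $h:\mathbf{C}\to\mathbf{C}$ be a homeomorphism which is an isometry such that the orbit $\mathrm{orb}(x,h)$ is nowhere dense in $\mathbf{C}$ for every $x\in\mathbf{C}$. Then there exist $\Phi=(\varphi^L,\varphi^U)$ such that $\mathbf{F}_\Phi$ is a Fraïssé fence and a homeomorphism $\hat h$ of $\mathbf{F}_\Phi$ which is an isometry such that $h$ is a factor of $\hat h$. Moreover, if $\{K_n\}$ is a sequence of closed, $h$-invariant, nowhere dense subsets of $\mathbf{C}$, then $\Phi$ can be chosen so that $\varphi^L=\varphi^U$ on $\bigcup_n K_n$.
   Context: For $\Phi=(\varphi^L,\varphi^U)$ with $\varphi^L,\varphi^U:\mathbf{C}\to[0,1]$, $\varphi^L$ lower semicontinuous, $\varphi^U$ upper semicontinuous, $\varphi^L\le\varphi^U$, the fence is $\mathbf{F}_\Phi=\{(x,t)\in\mathbf{C}\times[0,1]:\varphi^L(x)\le t\le\varphi^U(x)\}$ with the maximum metric of $\mathbf{C}\times[0,1]$, and $\mathbf{F}_\Phi(x)=\{t:(x,t)\in\mathbf{F}_\Phi\}$. $\mathbf{F}_\Phi$ is a Fraïssé fence if for every $x\in\mathbf{C}$ and every continuum $I\subseteq\mathbf{F}_\Phi(x)$ there is a sequence $x_k\in\mathbf{C}\setminus\{x\}$ converging to $x$ such that each $\mathbf{F}_\Phi(x_k)$ is a nondegenerate arc and $\mathbf{F}_\Phi(x_k)\to I$ in the Hausdorff metric. *)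

From Stdlib Require Export Reals.
Open Scope R_scope.

Definition Cantor := nat -> bool.

Definition agree (n : nat) (x y : Cantor) : Prop :=
  forall i, (i < n)%nat -> x i = y i.

Definition is_metric {X : Type} (d : X -> X -> R) : Prop :=
  (forall x y, 0 <= d x y) /\
  (forall x y, d x y = 0 <-> x = y) /\
  (forall x y, d x y = d y x) /\
  (forall x y z, d x z <= d x y + d y z).

(** d is a metric on C inducing the product topology: at every point the
    d-balls and the cylinders form equivalent neighbourhood bases. *)
Definition compatible_metric (d : Cantor -> Cantor -> R) : Prop :=
  is_metric d /\
  forall x,
    (forall eps, 0 < eps -> exists n, forall y, agree n x y -> d x y < eps) /\
    (forall n, exists eps, 0 < eps /\ forall y, d x y < eps -> agree n x y).

Definition mcontinuous {X Y : Type} (dX : X -> X -> R) (dY : Y -> Y -> R)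
  (f : X -> Y) : Prop :=
  forall x eps, 0 < eps -> exists delta, 0 < delta /\
    forall y, dX x y < delta -> dY (f x) (f y) < eps.

Definition homeomorphism {X : Type} (dX : X -> X -> R) (f : X -> X) : Prop :=
  exists g : X -> X, (forall x, g (f x) = x) /\ (forall x, f (g x) = x) /\
    mcontinuous dX dX f /\ mcontinuous dX dX g.

Definition isometry {X : Type} (dX : X -> X -> R) (f : X -> X) : Prop :=
  forall x y, dX (f x) (f y) = dX x y.

Definition mclosure {X : Type} (d : X -> X -> R) (A : X -> Prop) : X -> Prop :=
  fun x => forall eps, 0 < eps -> exists y, A y /\ d x y < eps.

Definition minterior {X : Type} (d : X -> X -> R) (A : X -> Prop) : X -> Prop :=
  fun x => exists eps, 0 < eps /\ forall y, d x y < eps -> A y.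

Definition mclosed {X : Type} (d : X -> X -> R) (A : X -> Prop) : Prop :=
  forall x, mclosure d A x -> A x.

Definition nowhere_dense {X : Type} (d : X -> X -> R) (A : X -> Prop) : Prop :=
  forall x, ~ minterior d (mclosure d A) x.

Definition orbit {X : Type} (h : X -> X) (x : X) : X -> Prop :=
  fun y => exists n : nat, y = Nat.iter n h x.

Definition lsc (d : Cantor -> Cantor -> R) (f : Cantor -> R) : Prop :=
  forall x eps, 0 < eps -> exists delta, 0 < delta /\
    forall y, d x y < delta -> f x - eps < f y.

Definition usc (d : Cantor -> Cantor -> R) (f : Cantor -> R) : Prop :=
  forall x eps, 0 < eps -> exists delta, 0 < delta /\
    forall y, d x y < delta -> f y < f x + eps.

Definition admissible (d : Cantor -> Cantor -> R) (phiL phiU : Cantor -> R)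
  : Prop :=
  (forall x, 0 <= phiL x <= 1) /\ (forall x, 0 <= phiU x <= 1) /\
  lsc d phiL /\ usc d phiU /\ (forall x, phiL x <= phiU x).

Definition fence (phiL phiU : Cantor -> R) : Type :=
  { p : Cantor * R | phiL (fst p) <= snd p <= phiU (fst p) }.

Definition fence_dist (d : Cantor -> Cantor -> R) (phiL phiU : Cantor -> R)
  (p q : fence phiL phiU) : R :=
  Rmax (d (fst (proj1_sig p)) (fst (proj1_sig q)))
       (Rabs (snd (proj1_sig p) - snd (proj1_sig q))).

Definition fiber (phiL phiU : Cantor -> R) (x : Cantor) : R -> Prop :=
  fun t => phiL x <= t <= phiU x.

Definition connectedR (I : R -> Prop) : Prop :=
  forall U V : R -> Prop, open_set U -> open_set V ->
    (forall t, I t -> U t \/ V t) ->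
    (exists t, I t /\ U t) -> (exists t, I t /\ V t) ->
    exists t, I t /\ U t /\ V t.

Definition continuumR (I : R -> Prop) : Prop :=
  (exists t, I t) /\ compact I /\ connectedR I.

(** A (nondegenerate) arc: a homeomorphic image of [0,1], i.e. the image of
    [0,1] under a continuous injective map. *)
Definition arcR (A : R -> Prop) : Prop :=
  exists f : R -> R,
    (forall s, 0 <= s <= 1 -> continuity_pt f s) /\
    (forall s1 s2, 0 <= s1 <= 1 -> 0 <= s2 <= 1 -> f s1 = f s2 -> s1 = s2) /\
    (forall t, A t <-> exists s, 0 <= s <= 1 /\ f s = t).

Definition hausdorff_cvg (A : nat -> R -> Prop) (I : R -> Prop) : Prop :=
  forall eps, 0 < eps -> exists N, forall k, (N <= k)%nat ->
    (forall a, A k a -> exists b, I b /\ Rabs (a - b) < eps) /\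
    (forall b, I b -> exists a, A k a /\ Rabs (a - b) < eps).

Definition seq_cvg (d : Cantor -> Cantor -> R) (x : nat -> Cantor) (l : Cantor)
  : Prop :=
  forall eps, 0 < eps -> exists N, forall k, (N <= k)%nat -> d (x k) l < eps.

Definition fraisse_fence (d : Cantor -> Cantor -> R) (phiL phiU : Cantor -> R)
  : Prop :=
  forall x (I : R -> Prop),
    continuumR I -> (forall t, I t -> fiber phiL phiU x t) ->
    exists xs : nat -> Cantor,
      (forall k, xs k <> x) /\ seq_cvg d xs x /\
      (forall k, arcR (fiber phiL phiU (xs k))) /\
      hausdorff_cvg (fun k => fiber phiL phiU (xs k)) I.

Definition factor_of {X Y : Type} (dX : X -> X -> R) (dY : Y -> Y -> R)
  (g : Y -> Y) (f : X -> X) : Prop :=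
  exists pi : X -> Y, mcontinuous dX dY pi /\
    (forall y, exists x, pi x = y) /\ (forall x, pi (f x) = g (pi x)).

Definition good_fence (d : Cantor -> Cantor -> R) (h : Cantor -> Cantor)
  (phiL phiU : Cantor -> R) : Prop :=
  admissible d phiL phiU /\ fraisse_fence d phiL phiU /\
  exists hh : fence phiL phiU -> fence phiL phiU,
    homeomorphism (fence_dist d phiL phiU) hh /\
    isometry (fence_dist d phiL phiU) hh /\
    factor_of (fence_dist d phiL phiU) d h hh.

From Stdlib Require Import Reals Lra Lia Classical ClassicalEpsilon Cantor List ZArith
  FunctionalExtensionality PropExtensionality ProofIrrelevance.
Open Scope R_scope.

(** The fence is assembled from functions that are continuous for the orbit pseudometric
    [δ x y = inf_(a,b) d (h^a x) (h^b y)]. Such functions are constant along orbits, so [h × id]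
    maps the fence to itself, isometrically, with the projection as factor map. Because [h] is an
    isometry of a compact space, every point is recurrent; hence [δ x y = 0] puts [x] in the
    closure of the orbit of [y], which is nowhere dense.

    [φ^L = sup lo] and [φ^U = inf hi] are monotone limits of [δ]-continuous functions [lo < hi],
    so [φ^L] is lsc and [φ^U] is usc. Countably many requests (a cylinder and a target interval
    from a dyadic grid) are served in turn: by Baire's theorem the cylinder contains a point [y]
    outside every [K n] and outside the [δ]-null classes of the points chosen so far; a [δ]-bump
    around [y] moves the fiber at [y] onto the target, and [y] is then frozen. Between requests
    [hi - lo] is squeezed to [2^-k] on [K n], away from the frozen points, which an invariant
    closed set misses at positive [δ]-distance. The served requests make every subcontinuum of
    every fiber a limit of nondegenerate fibers at nearby points. *)

(** Junk value: [supR E] is unspecified unless [E] is nonempty and bounded above. *)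
Definition supR (E : R -> Prop) : R :=
  epsilon (inhabits 0) (fun m => (forall v, E v -> v <= m) /\
     (forall m', (forall v, E v -> v <= m') -> m <= m')).

Definition infR (E : R -> Prop) : R := - supR (fun v => E (- v)).

Lemma supR_is_lub (E : R -> Prop) M : (exists v, E v) -> (forall v, E v -> v <= M) ->
  is_lub E (supR E).
Proof.
  intros Hne Hb. unfold supR. apply epsilon_spec.
  destruct (completeness E (ex_intro _ M Hb) Hne) as [m [H1 H2]].
  exists m. split; [exact H1 | exact H2].
Qed.

Lemma supR_ub (E : R -> Prop) M v : (forall v, E v -> v <= M) -> E v -> v <= supR E.
Proof. intros Hb Hv. apply (proj1 (supR_is_lub E M (ex_intro _ v Hv) Hb)); auto. Qed.

Lemma supR_least (E : R -> Prop) M m' : (exists v, E v) -> (forall v, E v -> v <= M) ->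
  (forall v, E v -> v <= m') -> supR E <= m'.
Proof. intros Hne Hb H. apply (proj2 (supR_is_lub E M Hne Hb)); auto. Qed.

Lemma supR_approx (E : R -> Prop) M eps : (exists v, E v) -> (forall v, E v -> v <= M) ->
  0 < eps -> exists v, E v /\ supR E - eps < v.
Proof.
  intros Hne Hb He. apply NNPP. intro Hn.
  assert (supR E <= supR E - eps); [|lra].
  apply supR_least with M; auto. intros v Hv.
  destruct (Rle_or_lt v (supR E - eps)); auto. exfalso; eauto.
Qed.

Lemma infR_lb (E : R -> Prop) m v : (forall v, E v -> m <= v) -> E v -> infR E <= v.
Proof.
  intros Hb Hv. unfold infR.
  assert (- v <= supR (fun v => E (- v))); [|lra].
  apply supR_ub with (- m).
  - intros w Hw. apply Hb in Hw. lra.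
  - rewrite Ropp_involutive; auto.
Qed.

Lemma infR_greatest (E : R -> Prop) m m' : (exists v, E v) -> (forall v, E v -> m <= v) ->
  (forall v, E v -> m' <= v) -> m' <= infR E.
Proof.
  intros [v Hv] Hb H. unfold infR.
  assert (supR (fun v => E (- v)) <= - m'); [|lra].
  apply supR_least with (- m).
  - exists (- v); rewrite Ropp_involutive; auto.
  - intros w Hw. apply Hb in Hw. lra.
  - intros w Hw. apply H in Hw. lra.
Qed.

Lemma infR_approx (E : R -> Prop) m eps : (exists v, E v) -> (forall v, E v -> m <= v) ->
  0 < eps -> exists v, E v /\ v < infR E + eps.
Proof.
  intros [v0 Hv0] Hb He. unfold infR.
  destruct (supR_approx (fun v => E (- v)) (- m) eps) as [w [Hw1 Hw2]]; auto.
  - exists (- v0); rewrite Ropp_involutive; auto.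
  - intros w Hw. apply Hb in Hw. lra.
  - exists (- w). split; auto. lra.
Qed.


Lemma pow2_inv_small x : 0 < x -> exists k, / 2 ^ k < x.
Proof.
  intros Hx. destruct (archimed (/ x)) as [Hup _].
  assert (Hpos : (0 < up (/ x))%Z).
  { apply lt_IZR. pose proof (Rinv_0_lt_compat x Hx). simpl. lra. }
  exists (Z.to_nat (up (/ x))).
  assert (Hk : forall k, INR k < 2 ^ k).
  { induction k. simpl; lra. rewrite S_INR. simpl.
    assert (1 <= 2 ^ k) by (apply pow_R1_Rle; lra). lra. }
  specialize (Hk (Z.to_nat (up (/ x)))). rewrite INR_IZR_INZ, Z2Nat.id in Hk by lia.
  assert (Hlt : / x < 2 ^ Z.to_nat (up (/ x))) by lra.
  apply Rinv_lt_contravar in Hlt; [rewrite Rinv_inv in Hlt; exact Hlt |].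
  apply Rmult_lt_0_compat; [apply Rinv_0_lt_compat; lra | apply pow_lt; lra].
Qed.

Lemma pow2_inv_antitone N k : (N <= k)%nat -> / 2 ^ k <= / 2 ^ N.
Proof. intros H. apply Rinv_le_contravar. apply pow_lt; lra. apply Rle_pow; auto. lra. Qed.

Lemma grid_point_between (a b step : R) : -1 <= a -> 0 < step -> a + step < b ->
  exists i : nat, a < INR i * step - 1 < b.
Proof.
  intros Ha Hs Hab. set (q := (a + 1) / step).
  assert (Hq : 0 <= q) by (unfold q; apply Rmult_le_pos; [lra | left; apply Rinv_0_lt_compat; lra]).
  destruct (archimed q) as [H1 H2].
  assert (Hpos : (0 < up q)%Z) by (apply lt_IZR; simpl; lra).
  exists (Z.to_nat (up q)). rewrite INR_IZR_INZ, Z2Nat.id by lia.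
  assert (E : a + 1 = q * step) by (unfold q; field; lra).
  split.
  - enough (q * step < IZR (up q) * step) by lra. apply Rmult_lt_compat_r; lra.
  - enough (IZR (up q) * step <= (q + 1) * step) by lra. apply Rmult_le_compat_r; lra.
Qed.

Lemma arc_interval l u : l < u -> arcR (fun t => l <= t <= u).
Proof.
  intros Hlu. exists (fun s => l + s * (u - l)). split; [| split].
  - intros s _. reg.
  - intros s1 s2 _ _ E. apply Rmult_eq_reg_r with (u - l); lra.
  - intros t. split.
    + intros Ht. exists ((t - l) / (u - l)). split; [| field; lra].
      split; [apply Rle_mult_inv_pos; lra |].
      apply Rmult_le_reg_r with (u - l); [lra |].
      unfold Rdiv. rewrite Rmult_assoc, Rinv_l; lra.
    + intros [s [Hs <-]]. split; nra.
Qed.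

Lemma compact_avoid_nbhd I w : compact I -> ~ I w ->
  exists e, 0 < e /\ forall y, Rabs (y - w) < e -> ~ I y.
Proof.
  intros Hcomp Hw. destruct (compact_P2 I Hcomp w Hw) as [[e He] Hdisc].
  exists e. split; [exact He | intros y Hy; apply (Hdisc y Hy)].
Qed.

Lemma compact_sup_mem I : (exists v, I v) -> compact I ->
  I (supR I) /\ forall t, I t -> t <= supR I.
Proof.
  intros Hne Hcomp. destruct (compact_P1 I Hcomp) as [m [M HmM]].
  assert (Hub : forall t, I t -> t <= supR I)
    by (intros t Ht; apply supR_ub with M; auto; intros; apply HmM; auto).
  split; auto. apply NNPP. intro Hn.
  destruct (compact_avoid_nbhd I _ Hcomp Hn) as [e [He Hout]].
  destruct (supR_approx I M e) as [y [Hy Hy2]]; auto; [intros; apply HmM; auto |].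
  apply (Hout y); auto. pose proof (Hub y Hy). apply Rabs_def1; lra.
Qed.

Lemma compact_inf_mem I : (exists v, I v) -> compact I ->
  I (infR I) /\ forall t, I t -> infR I <= t.
Proof.
  intros Hne Hcomp. destruct (compact_P1 I Hcomp) as [m [M HmM]].
  assert (Hlb : forall t, I t -> infR I <= t)
    by (intros t Ht; apply infR_lb with m; auto; intros; apply HmM; auto).
  split; auto. apply NNPP. intro Hn.
  destruct (compact_avoid_nbhd I _ Hcomp Hn) as [e [He Hout]].
  destruct (infR_approx I m e) as [y [Hy Hy2]]; auto; [intros; apply HmM; auto |].
  apply (Hout y); auto. pose proof (Hlb y Hy). apply Rabs_def1; lra.
Qed.

Lemma open_half_line_lt t : open_set (fun y => y < t).
Proof.
  intros y Hy. exists (mkposreal (t - y) ltac:(lra)). intros w Hw.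
  unfold disc in Hw. simpl in Hw. apply Rabs_def2 in Hw. lra.
Qed.

Lemma open_half_line_gt t : open_set (fun y => t < y).
Proof.
  intros y Hy. exists (mkposreal (y - t) ltac:(lra)). intros w Hw.
  unfold disc in Hw. simpl in Hw. apply Rabs_def2 in Hw. lra.
Qed.

Lemma continuum_interval I : continuumR I ->
  exists s0 t0, s0 <= t0 /\ forall t, I t <-> s0 <= t <= t0.
Proof.
  intros [Hne [Hcomp Hconn]].
  destruct (compact_sup_mem I Hne Hcomp) as [It0 Hub].
  destruct (compact_inf_mem I Hne Hcomp) as [Is0 Hlb].
  exists (infR I), (supR I). split; [apply Hub; auto |].
  intros t. split; [auto |]. intros [Ht1 Ht2]. apply NNPP. intro Hn.
  assert (Hs : infR I < t) by (destruct Ht1; auto; subst; contradiction).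
  assert (Ht : t < supR I) by (destruct Ht2; auto; subst; contradiction).
  destruct (Hconn (fun y => y < t) (fun y => t < y)) as [z [_ [Z1 Z2]]];
    [apply open_half_line_lt | apply open_half_line_gt | | eauto | eauto | lra].
  intros y Hy. destruct (Rtotal_order y t) as [H | [H | H]]; auto. subst; contradiction.
Qed.

Lemma interval_clamp l u s t eps a : s <= t -> Rabs (l - s) < eps -> Rabs (u - t) < eps ->
  l <= a <= u -> exists b, s <= b <= t /\ Rabs (a - b) < eps.
Proof.
  intros Hst Hl Hu Ha. apply Rabs_def2 in Hl. apply Rabs_def2 in Hu.
  exists (Rmax s (Rmin a t)).
  split; [split; [apply Rmax_l | apply Rmax_lub; [lra | apply Rmin_r]] |].
  apply Rabs_def1; unfold Rmax, Rmin; destruct (Rle_dec a t); destruct (Rle_dec s _); lra.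
Qed.

Lemma hausdorff_interval (A : nat -> R -> Prop) (l u : nat -> R) s t :
  s <= t -> (forall k, l k <= u k) -> (forall k x, A k x <-> l k <= x <= u k) ->
  (forall eps, 0 < eps -> exists N, forall k, (N <= k)%nat ->
     Rabs (l k - s) < eps /\ Rabs (u k - t) < eps) ->
  hausdorff_cvg A (fun x => s <= x <= t).
Proof.
  intros Hst Hlu HA Hcvg eps He. destruct (Hcvg eps He) as [N HN]. exists N. intros k Hk.
  destruct (HN k Hk) as [Hl Hu]. split.
  - intros a Ha. apply HA in Ha. apply (interval_clamp (l k) (u k)); auto.
  - intros b Hb. destruct (interval_clamp s t (l k) (u k) eps b) as [a [Ha Hab]]; auto;
      try (rewrite Rabs_minus_sym; auto).
    exists a. split; [apply HA; auto | rewrite Rabs_minus_sym; auto].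
Qed.

Section PseudoContinuity.
Context {X : Type} (dist : X -> X -> R).

Definition nbhd (W : X -> Prop) (z : X) : Prop := exists r, 0 < r /\ forall w, dist z w < r -> W w.

Lemma nbhd_and (V W : X -> Prop) z : nbhd V z -> nbhd W z -> nbhd (fun w => V w /\ W w) z.
Proof.
  intros [r1 [Hr1 H1]] [r2 [Hr2 H2]]. exists (Rmin r1 r2). split; [apply Rmin_pos; auto |].
  intros w Hw. pose proof (Rmin_l r1 r2). pose proof (Rmin_r r1 r2).
  split; [apply H1 | apply H2]; lra.
Qed.

Definition pcontinuous (f : X -> R) : Prop :=
  forall z e, 0 < e -> exists r, 0 < r /\ forall w, dist z w < r -> Rabs (f w - f z) < e.

Lemma pcontinuous_const c : pcontinuous (fun _ => c).
Proof. intros z e He. exists 1. split; [lra |]. intros w _. rewrite Rminus_diag, Rabs_R0. auto. Qed.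

Lemma pcontinuous_ext f g : (forall z, f z = g z) -> pcontinuous f -> pcontinuous g.
Proof.
  intros E Hf z e He. destruct (Hf z e He) as [r [Hr H]].
  exists r. split; auto. intros w Hw. rewrite <- !E. auto.
Qed.

Lemma pcontinuous_common_radius f g z e : pcontinuous f -> pcontinuous g -> 0 < e ->
  exists r, 0 < r /\ forall w, dist z w < r -> Rabs (f w - f z) < e /\ Rabs (g w - g z) < e.
Proof.
  intros Hf Hg He.
  destruct (Hf z e He) as [r1 [Hr1 H1]]. destruct (Hg z e He) as [r2 [Hr2 H2]].
  exists (Rmin r1 r2). split; [apply Rmin_pos; auto |].
  intros w Hw. pose proof (Rmin_l r1 r2). pose proof (Rmin_r r1 r2).
  split; [apply H1 | apply H2]; lra.
Qed.

Lemma pcontinuous_plus f g : pcontinuous f -> pcontinuous g -> pcontinuous (fun z => f z + g z).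
Proof.
  intros Hf Hg z e He.
  destruct (pcontinuous_common_radius f g z (e / 2) Hf Hg) as [r [Hr H]]; [lra |].
  exists r. split; auto. intros w Hw. destruct (H w Hw) as [H1 H2].
  apply Rabs_def2 in H1. apply Rabs_def2 in H2. apply Rabs_def1; lra.
Qed.

Lemma pcontinuous_scal c f : pcontinuous f -> pcontinuous (fun z => c * f z).
Proof.
  intros Hf z e He. pose proof (Rabs_pos c) as Hc.
  destruct (Hf z (e / (Rabs c + 1))) as [r [Hr H]]; [apply Rdiv_lt_0_compat; lra |].
  exists r. split; auto. intros w Hw.
  replace (c * f w - c * f z) with (c * (f w - f z)) by ring. rewrite Rabs_mult.
  specialize (H w Hw). pose proof (Rabs_pos (f w - f z)).
  assert (Rabs c * Rabs (f w - f z) <= Rabs c * (e / (Rabs c + 1)))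
    by (apply Rmult_le_compat_l; lra).
  assert (Rabs c * (e / (Rabs c + 1)) < e).
  { apply Rmult_lt_reg_r with (Rabs c + 1); [lra |]. field_simplify; lra. }
  lra.
Qed.

Lemma pcontinuous_max f g : pcontinuous f -> pcontinuous g ->
  pcontinuous (fun z => Rmax (f z) (g z)).
Proof.
  intros Hf Hg z e He. destruct (pcontinuous_common_radius f g z e Hf Hg He) as [r [Hr H]].
  exists r. split; auto. intros w Hw. destruct (H w Hw) as [H1 H2].
  apply Rabs_def2 in H1. apply Rabs_def2 in H2. apply Rabs_def1;
    unfold Rmax; destruct (Rle_dec (f w) (g w)); destruct (Rle_dec (f z) (g z)); lra.
Qed.

Lemma pcontinuous_min f g : pcontinuous f -> pcontinuous g ->
  pcontinuous (fun z => Rmin (f z) (g z)).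
Proof.
  intros Hf Hg z e He. destruct (pcontinuous_common_radius f g z e Hf Hg He) as [r [Hr H]].
  exists r. split; auto. intros w Hw. destruct (H w Hw) as [H1 H2].
  apply Rabs_def2 in H1. apply Rabs_def2 in H2. apply Rabs_def1;
    unfold Rmin; destruct (Rle_dec (f w) (g w)); destruct (Rle_dec (f z) (g z)); lra.
Qed.

Lemma pcontinuous_lt f z c : pcontinuous f -> f z < c -> nbhd (fun w => f w < c) z.
Proof.
  intros Hf Hz. destruct (Hf z (c - f z)) as [r [Hr H]]; [lra |].
  exists r. split; auto. intros w Hw. specialize (H w Hw). apply Rabs_def2 in H. lra.
Qed.

Lemma pcontinuous_gt f z c : pcontinuous f -> c < f z -> nbhd (fun w => c < f w) z.
Proof.
  intros Hf Hz. destruct (Hf z (f z - c)) as [r [Hr H]]; [lra |].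
  exists r. split; auto. intros w Hw. specialize (H w Hw). apply Rabs_def2 in H. lra.
Qed.

End PseudoContinuity.

Lemma pcontinuous_weaken (X : Type) (d1 d2 : X -> X -> R) f :
  (forall x y, d2 x y <= d1 x y) -> pcontinuous d2 f -> pcontinuous d1 f.
Proof.
  intros Hle Hf z e He. destruct (Hf z e He) as [r [Hr H]].
  exists r. split; auto. intros w Hw. apply H. pose proof (Hle z w). lra.
Qed.

Lemma agree_le n m x y : (m <= n)%nat -> agree n x y -> agree m x y.
Proof. intros Hmn H i Hi. apply H. lia. Qed.

Lemma agree_sym n x y : agree n x y -> agree n y x.
Proof. intros H i Hi. symmetry. auto. Qed.

Lemma agree_trans n x y z : agree n x y -> agree n y z -> agree n x z.
Proof. intros H1 H2 i Hi. rewrite H1, H2; auto. Qed.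

Lemma agree_chain_limit (n : nat -> nat) (z : nat -> Cantor) :
  (forall j, (j <= n j)%nat) -> (forall j, (n j <= n (S j))%nat) ->
  (forall j, agree (n j) (z j) (z (S j))) ->
  forall j, agree (n j) (z j) (fun i => z (S i) i).
Proof.
  intros Hn Hmono Hz.
  assert (Hle : forall j k, (j <= k)%nat -> (n j <= n k)%nat).
  { intros j k Hjk. induction Hjk; auto. specialize (Hmono m). lia. }
  assert (Hchain : forall j k, (j <= k)%nat -> agree (n j) (z j) (z k)).
  { intros j k Hjk. induction Hjk. intros i _; reflexivity.
    apply agree_trans with (z m); auto. apply agree_le with (n m); auto. }
  intros j i Hi. destruct (le_lt_dec (S i) j) as [H | H].
  - symmetry. apply (Hchain (S i) j H). specialize (Hn (S i)). lia.
  - apply (Hchain j (S i)); [lia | exact Hi].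
Qed.

Definition frequently_agree (u : nat -> Cantor) (j : nat) (z : Cantor) : Prop :=
  forall M, exists k, (M <= k)%nat /\ agree j z (u k).

Definition set_bit (z : Cantor) (j : nat) (b : bool) : Cantor :=
  fun i => if Nat.eqb i j then b else z i.

Lemma agree_set_bit j z b : agree j z (set_bit z j b).
Proof. intros i Hi. unfold set_bit. destruct (Nat.eqb_spec i j); [lia | reflexivity]. Qed.

Lemma frequently_agree_extend u j z : frequently_agree u j z ->
  exists z', agree j z z' /\ frequently_agree u (S j) z'.
Proof.
  intros Hz.
  destruct (classic (frequently_agree u (S j) (set_bit z j true))) as [Ht | Ht];
    [exists (set_bit z j true); split; auto using agree_set_bit |].
  destruct (classic (frequently_agree u (S j) (set_bit z j false))) as [Hf | Hf];
    [exists (set_bit z j false); split; auto using agree_set_bit |].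
  exfalso.
  apply not_all_ex_not in Ht as [M1 HM1]. apply not_all_ex_not in Hf as [M2 HM2].
  destruct (Hz (max M1 M2)) as [k [Hk Hag]].
  assert (Hag' : agree (S j) (set_bit z j (u k j)) (u k)).
  { intros i Hi. unfold set_bit.
    destruct (Nat.eqb_spec i j); [subst; reflexivity | apply Hag; lia]. }
  destruct (u k j); [apply HM1 | apply HM2]; exists k; split; auto; lia.
Qed.

Lemma cantor_cluster_point (u : nat -> Cantor) :
  exists c, forall N, frequently_agree u N c.
Proof.
  set (next := fun j z => epsilon (inhabits z)
     (fun z' => agree j z z' /\ frequently_agree u (S j) z')).
  set (ch := fix ch (j : nat) : Cantor := match j with O => u O | S j' => next j' (ch j') end).
  assert (Hfreq : forall j, frequently_agree u j (ch j)).
  { induction j.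
    - intros M. exists M. split; auto. intros i Hi; lia.
    - apply (epsilon_spec (inhabits (ch j)) _ (frequently_agree_extend u j (ch j) IHj)). }
  assert (Hstep : forall j, agree j (ch j) (ch (S j))).
  { intro j.
    apply (epsilon_spec (inhabits (ch j)) _ (frequently_agree_extend u j (ch j) (Hfreq j))). }
  pose proof (agree_chain_limit (fun j => j) ch (fun j => le_n j) (fun j => le_S _ _ (le_n j))
    Hstep) as Hlim.
  exists (fun i => ch (S i) i). intros N M.
  destruct (Hfreq N M) as [k [Hk Hag]]. exists k. split; auto.
  apply agree_trans with (ch N); [apply agree_sym, Hlim | exact Hag].
Qed.

(** Cylinders are indexed by naturals: [cyl_center c] has the binary digits of [c] as
    coordinates. *)
Definition cyl_center (c : nat) : Cantor := fun i => Nat.testbit c i.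

Lemma cyl_center_exists N x : exists c, agree N (cyl_center c) x.
Proof.
  revert x. induction N; intros x.
  - exists 0%nat. intros i Hi. lia.
  - destruct (IHN (fun i => x (S i))) as [c Hc].
    exists (2 * c + Nat.b2n (x 0%nat))%nat. intros [|i] Hi; unfold cyl_center.
    + destruct (x 0%nat); [apply Nat.odd_odd | rewrite Nat.add_0_r; apply Nat.odd_even].
    + change (Nat.testbit (Nat.div2 (2 * c + Nat.b2n (x 0%nat))) i = x (S i)).
      replace (Nat.div2 (2 * c + Nat.b2n (x 0%nat))) with c; [apply Hc; lia |].
      destruct (x 0%nat); [symmetry; apply Nat.div2_odd' |].
      rewrite Nat.add_0_r. symmetry. apply Nat.div2_even.
Qed.

Section CompatibleMetric.
Variable d : Cantor -> Cantor -> R.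
Hypothesis Hd : compatible_metric d.

Lemma d_nonneg x y : 0 <= d x y.
Proof. apply Hd. Qed.

Lemma d_refl x : d x x = 0.
Proof. apply Hd. reflexivity. Qed.

Lemma d_sym x y : d x y = d y x.
Proof. apply Hd. Qed.

Lemma d_triangle x y z : d x z <= d x y + d y z.
Proof. apply Hd. Qed.

Lemma cylinder_in_ball x eps : 0 < eps -> exists n, forall y, agree n x y -> d x y < eps.
Proof. apply Hd. Qed.

Lemma ball_in_cylinder x n : exists eps, 0 < eps /\ forall y, d x y < eps -> agree n x y.
Proof. apply Hd. Qed.

(** The ball form of nowhere density. *)
Definition avoidable (A : Cantor -> Prop) : Prop :=
  forall z r, 0 < r -> exists w r', 0 < r' /\ (forall u, d w u < r' -> d z u < r) /\
     (forall u, d w u < r' -> ~ A u).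

Lemma avoidable_closure A : nowhere_dense d A -> avoidable (mclosure d A).
Proof.
  intros HA z r Hr.
  assert (Hex : exists y, d z y < r /\ ~ mclosure d A y).
  { apply NNPP. intro Hn. apply (HA z). exists r. split; auto. intros y Hy.
    apply NNPP. intro Hy2. apply Hn. eauto. }
  destruct Hex as [y [Hy1 Hy2]].
  apply not_all_ex_not in Hy2 as [e He]. apply imply_to_and in He as [He1 He2].
  exists y, (Rmin (e / 2) (r - d z y)). split; [apply Rmin_pos; lra |].
  pose proof (Rmin_l (e / 2) (r - d z y)). pose proof (Rmin_r (e / 2) (r - d z y)).
  split.
  - intros u Hu. pose proof (d_triangle z y u). lra.
  - intros u Hu Hcu. destruct (Hcu (e / 2)) as [v [Hv1 Hv2]]; [lra |].
    apply He2. exists v. split; auto. pose proof (d_triangle y u v). lra.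
Qed.

Lemma avoidable_sub A B : (forall x, A x -> B x) -> avoidable B -> avoidable A.
Proof.
  intros Hs HB z r Hr. destruct (HB z r Hr) as [w [r' [H1 [H2 H3]]]].
  exists w, r'. split; auto. split; auto. intros u Hu HAu. apply (H3 u Hu). auto.
Qed.

Lemma avoidable_union A B : avoidable A -> avoidable B -> avoidable (fun x => A x \/ B x).
Proof.
  intros HA HB z r Hr.
  destruct (HA z r Hr) as [w [r' [H1 [H2 H3]]]].
  destruct (HB w r' H1) as [w' [r'' [H1' [H2' H3']]]].
  exists w', r''. split; auto. split; auto.
  intros u Hu [Hu' | Hu']; [apply (H3 u) | apply (H3' u)]; auto.
Qed.

Lemma avoidable_closed A : mclosed d A -> nowhere_dense d A -> avoidable A.
Proof.
  intros Hcl Hn. apply avoidable_sub with (mclosure d A); [| apply avoidable_closure; auto].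
  intros x Hx eps He. exists x. rewrite d_refl. auto.
Qed.

Lemma avoidable_deeper_cylinder F : avoidable F -> forall n z, exists n' w,
  (n < n')%nat /\ agree n z w /\ forall u, agree n' w u -> ~ F u.
Proof.
  intros HF n z.
  destruct (ball_in_cylinder z n) as [r [Hr Hr2]].
  destruct (HF z r Hr) as [w [r' [H1 [H2 H3]]]].
  destruct (cylinder_in_ball w r' H1) as [N HN].
  exists (Nat.max N (S n)), w. split; [lia | split].
  - apply Hr2, H2. rewrite d_refl. auto.
  - intros u Hu. apply H3, HN. apply agree_le with (Nat.max N (S n)); [lia | auto].
Qed.

Lemma baire_avoid (W : Cantor -> Prop) (F : nat -> Cantor -> Prop) x0 :
  (forall z, W z -> nbhd d W z) -> W x0 ->
  (forall k, avoidable (F k)) -> exists y, W y /\ forall k, ~ F k y.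
Proof.
  intros HW Hx0 HF.
  set (deeper := fun k (nz nz' : nat * Cantor) => (fst nz < fst nz')%nat /\
     agree (fst nz) (snd nz) (snd nz') /\ forall u, agree (fst nz') (snd nz') u -> ~ F k u).
  assert (Hdeeper : forall k nz, exists nz', deeper k nz nz').
  { intros k [n z]. destruct (avoidable_deeper_cylinder (F k) (HF k) n z) as [n' [w Hw]].
    exists (n', w). exact Hw. }
  destruct (HW x0 Hx0) as [r0 [Hr0 Hr0']].
  destruct (cylinder_in_ball x0 r0 Hr0) as [N0 HN0].
  set (ch := fix ch (j : nat) : nat * Cantor :=
     match j with O => (N0, x0) | S j' => epsilon (inhabits (ch j')) (deeper j' (ch j')) end).
  assert (Hch : forall j, deeper j (ch j) (ch (S j))).
  { intro j. apply (epsilon_spec (inhabits (ch j)) (deeper j (ch j)) (Hdeeper j (ch j))). }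
  assert (Hdepth : forall j, (j <= fst (ch j))%nat).
  { induction j; [lia |]. pose proof (proj1 (Hch j)). lia. }
  pose proof (agree_chain_limit (fun j => fst (ch j)) (fun j => snd (ch j)) Hdepth
     (fun j => Nat.lt_le_incl _ _ (proj1 (Hch j))) (fun j => proj1 (proj2 (Hch j)))) as Hlim.
  eexists. split.
  - apply Hr0', HN0, (Hlim 0%nat).
  - intros k. apply (proj2 (proj2 (Hch k))), (Hlim (S k)).
Qed.

End CompatibleMetric.

(** * The orbit pseudometric of an isometry *)

Definition orbit_dist (d : Cantor -> Cantor -> R) (h : Cantor -> Cantor) (x y : Cantor) : R :=
  infR (fun v => exists a b, v = d (Nat.iter a h x) (Nat.iter b h y)).

Section OrbitDistance.
Variables (d : Cantor -> Cantor -> R) (h : Cantor -> Cantor).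
Hypothesis Hd : compatible_metric d.
Hypothesis Hiso : isometry d h.
Local Notation δ := (orbit_dist d h).

Lemma isometry_iter n x y : d (Nat.iter n h x) (Nat.iter n h y) = d x y.
Proof. induction n; simpl; auto. rewrite Hiso; auto. Qed.

Lemma orbit_dist_nonempty x y :
  exists v, exists a b, v = d (Nat.iter a h x) (Nat.iter b h y).
Proof. exists (d x y), 0%nat, 0%nat. reflexivity. Qed.

Lemma orbit_dist_values_nonneg x y :
  forall v, (exists a b, v = d (Nat.iter a h x) (Nat.iter b h y)) -> 0 <= v.
Proof. intros v [a [b ->]]. apply d_nonneg, Hd. Qed.

Lemma orbit_dist_le_iter x y a b : δ x y <= d (Nat.iter a h x) (Nat.iter b h y).
Proof. apply infR_lb with 0; [apply orbit_dist_values_nonneg | eauto]. Qed.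

Lemma orbit_dist_le_d x y : δ x y <= d x y.
Proof. apply (orbit_dist_le_iter x y 0 0). Qed.

Lemma orbit_dist_ge x y m : (forall a b, m <= d (Nat.iter a h x) (Nat.iter b h y)) -> m <= δ x y.
Proof.
  intro H. apply infR_greatest with 0;
    [apply orbit_dist_nonempty | apply orbit_dist_values_nonneg | intros v [a [b ->]]; auto].
Qed.

Lemma orbit_dist_nonneg x y : 0 <= δ x y.
Proof. apply orbit_dist_ge. intros. apply d_nonneg, Hd. Qed.

Lemma orbit_dist_refl x : δ x x = 0.
Proof.
  pose proof (orbit_dist_le_d x x). pose proof (orbit_dist_nonneg x x).
  rewrite (d_refl d Hd) in *. lra.
Qed.

Lemma orbit_dist_approx x y eps : 0 < eps ->
  exists a b, d (Nat.iter a h x) (Nat.iter b h y) < δ x y + eps.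
Proof.
  intro He.
  destruct (infR_approx _ 0 eps (orbit_dist_nonempty x y) (orbit_dist_values_nonneg x y) He)
    as [v [[a [b ->]] Hv]].
  exists a, b. exact Hv.
Qed.

Lemma orbit_dist_sym x y : δ x y = δ y x.
Proof.
  apply Rle_antisym; apply orbit_dist_ge; intros a b; rewrite (d_sym d Hd);
    apply orbit_dist_le_iter.
Qed.

Lemma orbit_dist_triangle x y z : δ x z <= δ x y + δ y z.
Proof.
  apply Rnot_lt_le. intro Hlt.
  set (e := (δ x z - δ x y - δ y z) / 2).
  assert (He : 0 < e) by (unfold e; lra).
  destruct (orbit_dist_approx x y e He) as [a [b H1]].
  destruct (orbit_dist_approx y z e He) as [b' [c H2]].
  (* Shift both near-optimal pairs so that they meet at the same iterate [h^(b'+b) y]. *)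
  assert (E1 : d (Nat.iter a h x) (Nat.iter b h y)
             = d (Nat.iter (b' + a) h x) (Nat.iter (b' + b) h y))
    by (rewrite !Nat.iter_add, isometry_iter; auto).
  assert (E2 : d (Nat.iter b' h y) (Nat.iter c h z)
             = d (Nat.iter (b' + b) h y) (Nat.iter (b + c) h z))
    by (rewrite Nat.add_comm, !Nat.iter_add, isometry_iter; auto).
  pose proof (orbit_dist_le_iter x z (b' + a) (b + c)).
  pose proof (d_triangle d Hd (Nat.iter (b' + a) h x) (Nat.iter (b' + b) h y)
                            (Nat.iter (b + c) h z)).
  unfold e in *. lra.
Qed.

Lemma orbit_dist_shift x y : δ (h x) y = δ x y.
Proof.
  apply Rle_antisym; apply orbit_dist_ge; intros a b.
  - rewrite <- (isometry_iter 1). simpl.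
    change (h (Nat.iter a h x)) with (Nat.iter (S a) h x). rewrite Nat.iter_succ_r.
    apply (orbit_dist_le_iter _ _ a (S b)).
  - rewrite <- Nat.iter_succ_r. apply orbit_dist_le_iter.
Qed.

Lemma pcontinuous_orbit_dist y : pcontinuous δ (fun z => δ z y).
Proof.
  intros z e He. exists e. split; auto. intros w Hw.
  pose proof (orbit_dist_triangle w z y). pose proof (orbit_dist_triangle z w y).
  rewrite (orbit_dist_sym w z) in *. apply Rabs_def1; lra.
Qed.

Lemma pcontinuous_orbit_invariant f z : pcontinuous δ f -> f (h z) = f z.
Proof.
  intros Hf. apply NNPP. intro Hne.
  destruct (Hf z (Rabs (f (h z) - f z))) as [r [Hr H]]; [apply Rabs_pos_lt; lra |].
  specialize (H (h z)). rewrite orbit_dist_sym, orbit_dist_shift, orbit_dist_refl in H. lra.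
Qed.

(** Compactness: a cluster point of the orbit of [p] is approached at two times [k1 < k2],
    and the isometry carries [h^k1 p] near [h^k2 p] back to [p] near [h^(k2-k1) p]. *)
Lemma isometry_recurrent p eps K0 : 0 < eps ->
  exists n, (K0 <= n)%nat /\ d p (Nat.iter n h p) < eps.
Proof.
  intro He.
  destruct (cantor_cluster_point (fun k => Nat.iter k h p)) as [c Hcl].
  destruct (cylinder_in_ball d Hd c (eps / 2)) as [N HN]; [lra |].
  destruct (Hcl N 0%nat) as [k1 [_ H1]].
  destruct (Hcl N (k1 + K0)%nat) as [k2 [Hk2 H2]].
  exists (k2 - k1)%nat. split; [lia |].
  apply HN in H1. apply HN in H2.
  assert (E : Nat.iter k2 h p = Nat.iter k1 h (Nat.iter (k2 - k1) h p))
    by (rewrite <- Nat.iter_add; f_equal; lia).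
  pose proof (d_triangle d Hd (Nat.iter k1 h p) c (Nat.iter k2 h p)) as Ht.
  rewrite (d_sym d Hd (Nat.iter k1 h p) c), E, isometry_iter in Ht. rewrite E in H2. lra.
Qed.

Lemma orbit_dist_small_iter p w e : 0 < e -> δ p w < e -> exists m, d p (Nat.iter m h w) < 2 * e.
Proof.
  intros He Hpw.
  destruct (orbit_dist_approx p w (e - δ p w)) as [a [b Hab]]; [lra |].
  destruct (isometry_recurrent p e a He) as [n [Hn Hn2]].
  exists ((n - a) + b)%nat.
  assert (E : Nat.iter n h p = Nat.iter (n - a) h (Nat.iter a h p))
    by (rewrite <- Nat.iter_add; f_equal; lia).
  rewrite Nat.iter_add.
  pose proof (d_triangle d Hd p (Nat.iter n h p) (Nat.iter (n - a) h (Nat.iter b h w))) as Ht.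
  rewrite E in Ht at 2. rewrite isometry_iter in Ht. lra.
Qed.

Lemma orbit_dist0_closure p z : δ z p = 0 -> mclosure d (orbit h p) z.
Proof.
  intros H0 eps He.
  destruct (orbit_dist_small_iter z p (eps / 2)) as [m Hm]; [lra | lra |].
  exists (Nat.iter m h p). split; [exists m; reflexivity | lra].
Qed.

Lemma invariant_iter (A : Cantor -> Prop) : (forall x, A x <-> A (h x)) ->
  forall n w, A w -> A (Nat.iter n h w).
Proof. intros HA n w Hw. induction n; simpl; auto. apply (proj1 (HA _)); auto. Qed.

Lemma closed_gap (A : Cantor -> Prop) p : mclosed d A -> ~ A p ->
  exists e, 0 < e /\ forall y, A y -> e <= d p y.
Proof.
  intros Hcl Hp.
  assert (Hn : ~ mclosure d A p) by auto.
  apply not_all_ex_not in Hn as [e He]. apply imply_to_and in He as [He1 He2].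
  exists e. split; auto. intros y Hy. apply Rnot_lt_le. intro Hlt. eauto.
Qed.

Lemma invariant_closed_orbit_gap (A : Cantor -> Prop) p : mclosed d A ->
  (forall x, A x <-> A (h x)) -> ~ A p ->
  exists mu, 0 < mu /\ forall w, A w -> mu <= δ p w.
Proof.
  intros Hcl HA Hp. destruct (closed_gap A p Hcl Hp) as [e [He Hgap]].
  exists (e / 2). split; [lra |]. intros w Hw. apply Rnot_lt_le. intro Hlt.
  destruct (orbit_dist_small_iter p w (e / 2)) as [m Hm]; [lra | auto |].
  pose proof (Hgap _ (invariant_iter A HA m w Hw)). lra.
Qed.

Lemma invariant_closed_orbit_gap_list (A : Cantor -> Prop) (P : list Cantor) : mclosed d A ->
  (forall x, A x <-> A (h x)) -> (forall p, In p P -> ~ A p) ->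
  exists mu, 0 < mu /\ forall p w, In p P -> A w -> mu <= δ p w.
Proof.
  intros Hcl HA. induction P as [|p P IH]; intros HP.
  - exists 1. split; [lra | intros p w []].
  - destruct IH as [mu1 [Hmu1 Hgap1]]; [intros q Hq; apply HP; right; auto |].
    destruct (invariant_closed_orbit_gap A p Hcl HA (HP p (or_introl eq_refl)))
      as [mu2 [Hmu2 Hgap2]].
    exists (Rmin mu1 mu2). split; [apply Rmin_pos; auto |].
    intros q w [<- | Hq] Hw.
    + eapply Rle_trans; [apply Rmin_r | auto].
    + eapply Rle_trans; [apply Rmin_l | auto].
Qed.

Hypothesis Horb : forall x, nowhere_dense d (orbit h x).

Lemma avoidable_orbit_dist0 (P : list Cantor) :
  avoidable d (fun z => exists p, In p P /\ δ z p = 0).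
Proof.
  induction P as [|p P IH].
  - intros z r Hr. exists z, r. split; auto. split; auto. intros u _ [p [[] _]].
  - apply avoidable_sub with (fun z => mclosure d (orbit h p) z \/ exists q, In q P /\ δ z q = 0).
    + intros x [q [[<- | Hq] Hx]]; [left; apply orbit_dist0_closure; auto | right; eauto].
    + apply avoidable_union; auto. apply avoidable_closure; auto.
Qed.

End OrbitDistance.

(** * Lifting isometries to fences *)

Lemma isometry_mcontinuous (X : Type) (dX : X -> X -> R) f : isometry dX f -> mcontinuous dX dX f.
Proof. intros Hf x eps He. exists eps. split; auto. intros y Hy. rewrite Hf. auto. Qed.

Section FenceLift.
Variables (d : Cantor -> Cantor -> R) (phiL phiU : Cantor -> R) (f : Cantor -> Cantor).
Hypothesis Hf : forall z, phiL (f z) = phiL z /\ phiU (f z) = phiU z.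

Lemma fence_eq (p q : fence phiL phiU) : proj1_sig p = proj1_sig q -> p = q.
Proof. destruct p as [p Hp], q as [q Hq]. simpl. intros ->. f_equal. apply proof_irrelevance. Qed.

Lemma fence_lift_mem (q : Cantor * R) : phiL (fst q) <= snd q <= phiU (fst q) ->
  phiL (f (fst q)) <= snd q <= phiU (f (fst q)).
Proof. destruct (Hf (fst q)) as [-> ->]. auto. Qed.

Definition fence_lift (p : fence phiL phiU) : fence phiL phiU :=
  exist _ (f (fst (proj1_sig p)), snd (proj1_sig p)) (fence_lift_mem (proj1_sig p) (proj2_sig p)).

Lemma fence_lift_isometry : isometry d f -> isometry (fence_dist d phiL phiU) fence_lift.
Proof. intros Hi p q. unfold fence_dist, fence_lift. simpl. rewrite Hi. reflexivity. Qed.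

End FenceLift.

Lemma fence_lift_comp phiL phiU f g Hf Hg (p : fence phiL phiU) :
  (forall x, g (f x) = x) -> fence_lift phiL phiU g Hg (fence_lift phiL phiU f Hf p) = p.
Proof. intros Hgf. apply fence_eq. destruct p as [[a t] Hp]. simpl. rewrite Hgf. reflexivity. Qed.

Lemma fence_projection_factor d phiL phiU h Hh : (forall x, phiL x <= phiU x) ->
  factor_of (fence_dist d phiL phiU) d h (fence_lift phiL phiU h Hh).
Proof.
  intros HLU. exists (fun p => fst (proj1_sig p)). split; [| split].
  - intros p eps He. exists eps. split; auto. intros q Hq. unfold fence_dist in Hq.
    pose proof (Rmax_l (d (fst (proj1_sig p)) (fst (proj1_sig q)))
                       (Rabs (snd (proj1_sig p) - snd (proj1_sig q)))). lra.
  - intro y. assert (Hy : phiL (fst (y, phiL y)) <= snd (y, phiL y) <= phiU (fst (y, phiL y)))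
      by (simpl; split; [lra | apply HLU]).
    exists (exist _ (y, phiL y) Hy). reflexivity.
  - intro p. reflexivity.
Qed.

Lemma fence_lift_homeomorphism d phiL phiU h Hh : homeomorphism d h -> isometry d h ->
  homeomorphism (fence_dist d phiL phiU) (fence_lift phiL phiU h Hh).
Proof.
  intros [g (Hgh & Hhg & _)] Hiso.
  assert (Hg : forall z, phiL (g z) = phiL z /\ phiU (g z) = phiU z).
  { intro z. rewrite <- (Hhg z) at 2 4. destruct (Hh (g z)) as [-> ->]. auto. }
  assert (Hgiso : isometry d g) by (intros x y; rewrite <- Hiso, !Hhg; reflexivity).
  exists (fence_lift phiL phiU g Hg).
  split; [| split; [| split]]; try (intro p; apply fence_lift_comp; auto);
    apply isometry_mcontinuous, fence_lift_isometry; auto.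
Qed.

Lemma bump_order (A B s t f : R) : 0 <= A -> A < B -> B <= 1 -> 0 <= f <= 1 ->
  (0 < f -> A < t /\ s < B) -> s < t ->
  0 <= Rmax A (s * f) /\ Rmax A (s * f) < Rmin B (1 - (1 - t) * f) /\
  Rmin B (1 - (1 - t) * f) <= 1.
Proof.
  intros HA HAB HB [Hf0 Hf1] Hnear Hst.
  split; [eapply Rle_trans; [exact HA | apply Rmax_l] |].
  split; [| eapply Rle_trans; [apply Rmin_l | exact HB]].
  destruct (Rle_lt_or_eq_dec 0 f Hf0) as [Hf | <-].
  - destruct (Hnear Hf) as [Ht Hs].
    apply Rmax_lub_lt; apply Rmin_glb_lt; auto.
    + destruct (Rle_or_lt t 1); nra.
    + destruct (Rle_or_lt s 0); nra.
    + destruct (Rle_or_lt (s + 1 - t) 0); nra.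
  - rewrite !Rmult_0_r. apply Rmax_lub_lt; apply Rmin_glb_lt; lra.
Qed.

Lemma squeeze_order (A B w : R) : 0 <= A -> A < B -> B <= 1 -> 0 < w ->
  0 <= Rmax A ((A + B) / 2 - w) /\ Rmax A ((A + B) / 2 - w) < Rmin B ((A + B) / 2 + w) /\
  Rmin B ((A + B) / 2 + w) <= 1.
Proof.
  intros. split; [eapply Rle_trans; [| apply Rmax_l]; auto |].
  split; [apply Rmax_lub_lt; apply Rmin_glb_lt; lra | eapply Rle_trans; [apply Rmin_l | auto]].
Qed.

Lemma list_min_pos (f : Cantor -> R) (P : list Cantor) r : 0 < r ->
  (forall p, In p P -> 0 < f p) ->
  exists rho, 0 < rho /\ rho <= r /\ forall p, In p P -> rho <= f p.
Proof.
  intros Hr. induction P as [|p P IH]; intros HP.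
  - exists r. split; auto. split; [lra | intros p []].
  - destruct IH as [rho [H1 [H2 H3]]]; [intros q Hq; apply HP; right; auto |].
    exists (Rmin rho (f p)). split; [apply Rmin_pos; auto; apply HP; left; auto |].
    split; [pose proof (Rmin_l rho (f p)); lra |].
    intros q [<- | Hq]; [apply Rmin_r | eapply Rle_trans; [apply Rmin_l | auto]].
Qed.


(** * The approximating pairs *)

Record approx := mk_approx { lo : Cantor -> R; hi : Cantor -> R; frozen : list Cantor }.

(** The [m]-th request asks for a point of the cylinder [agree N (cyl_center c)] whose fiber
    is within [grid_tol e] of [[grid_pt i e, grid_pt j e]]. *)
Definition request (m : nat) : nat * nat * nat * nat * nat :=
  let (m1, m2) := Cantor.of_nat m in
  let (N, c) := Cantor.of_nat m1 in
  let (m3, e) := Cantor.of_nat m2 in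
  let (i, j) := Cantor.of_nat m3 in (N, c, i, j, e).

Definition request_code (N c i j e : nat) : nat :=
  Cantor.to_nat (Cantor.to_nat (N, c), Cantor.to_nat (Cantor.to_nat (i, j), e)).

Lemma request_code_spec N c i j e : request (request_code N c i j e) = (N, c, i, j, e).
Proof. unfold request, request_code. rewrite !Cantor.cancel_of_to. reflexivity. Qed.

Definition grid_tol (e : nat) : R := / 2 ^ e.
Definition grid_pt (i e : nat) : R := INR i * (grid_tol e / 4) - 1.

Lemma grid_tol_pos e : 0 < grid_tol e.
Proof. apply Rinv_0_lt_compat, pow_lt. lra. Qed.

Lemma grid_bracket s0 t0 e : 0 <= s0 -> s0 <= t0 -> grid_tol e < 1 ->
  exists i j, s0 - grid_tol e < grid_pt i e < s0 - grid_tol e / 2 /\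
              t0 + grid_tol e / 2 < grid_pt j e < t0 + grid_tol e.
Proof.
  intros Hs Hst He. pose proof (grid_tol_pos e).
  destruct (grid_point_between (s0 - grid_tol e) (s0 - grid_tol e / 2) (grid_tol e / 4)) as [i Hi];
    try lra.
  destruct (grid_point_between (t0 + grid_tol e / 2) (t0 + grid_tol e) (grid_tol e / 4)) as [j Hj];
    try lra.
  exists i, j. unfold grid_pt. lra.
Qed.

Section Construction.
Variables (d : Cantor -> Cantor -> R) (h : Cantor -> Cantor) (K : nat -> Cantor -> Prop).
Local Notation δ := (orbit_dist d h).

Definition bump (y : Cantor) (rho : R) (z : Cantor) : R := Rmax 0 (1 - δ z y / rho).

Definition squeeze_width (P : list Cantor) (mu : R) (k : nat) (z : Cantor) : R :=
  fold_right (fun p acc => Rmax acc (1 - δ z p / mu)) (/ 2 ^ S k) P.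

Definition in_window (a : approx) N c s t eta y : Prop :=
  agree N (cyl_center c) y /\ lo a y < s + eta /\ t - eta < hi a y /\ lo a y < t /\ s < hi a y.

Definition request_witness (a : approx) N c s t eta y : Prop :=
  in_window a N c s t eta y /\ s < t /\
  (forall n, ~ K n y) /\ (forall p, In p (frozen a) -> 0 < δ y p).

Definition bump_radius (a : approx) (y : Cantor) (s t rho : R) : Prop :=
  0 < rho /\ (forall p, In p (frozen a) -> rho <= δ p y) /\
  (forall z, δ z y < rho -> lo a z < t /\ s < hi a z).

(** Serve request [m] at a witness [y] (if any): force [lo >= s] and [hi <= t] at [y] through a
    [δ]-bump that vanishes at the frozen points, then freeze [y]. *)
Definition serve (a : approx) (m : nat) : approx :=
  match request m with (N, c, i, j, e) =>
  let s := grid_pt i e in let t := grid_pt j e in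
  match excluded_middle_informative (exists y, request_witness a N c s t (grid_tol e) y) with
  | left _ =>
    let y := epsilon (inhabits (fun _ => true)) (request_witness a N c s t (grid_tol e)) in
    let rho := epsilon (inhabits 1) (bump_radius a y s t) in
    mk_approx (fun z => Rmax (lo a z) (s * bump y rho z))
              (fun z => Rmin (hi a z) (1 - (1 - t) * bump y rho z)) (y :: frozen a)
  | right _ => a
  end end.

Definition squeeze_gap (a : approx) (n : nat) (mu : R) : Prop :=
  0 < mu /\ forall p w, In p (frozen a) -> K n w -> mu <= δ p w.

(** For [m = (n, k)], shrink [hi - lo] to [2 ^ -k] on [K n], leaving the frozen points alone. *)
Definition squeeze (a : approx) (m : nat) : approx :=
  let (n, k) := Cantor.of_nat m in
  let w := squeeze_width (frozen a) (epsilon (inhabits 1) (squeeze_gap a n)) k in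
  mk_approx (fun z => Rmax (lo a z) ((lo a z + hi a z) / 2 - w z))
            (fun z => Rmin (hi a z) ((lo a z + hi a z) / 2 + w z)) (frozen a).

Definition step (a : approx) (m : nat) : approx := squeeze (serve a m) m.

Fixpoint stage (m : nat) : approx :=
  match m with O => mk_approx (fun _ => 0) (fun _ => 1) nil | S m' => step (stage m') m' end.

Record wf_approx (a : approx) : Prop := {
  wf_range : forall z, 0 <= lo a z /\ lo a z < hi a z /\ hi a z <= 1;
  wf_lo_cont : pcontinuous δ (lo a);
  wf_hi_cont : pcontinuous δ (hi a);
  wf_frozen : forall p, In p (frozen a) -> forall n, ~ K n p }.

Hypothesis Hd : compatible_metric d.
Hypothesis Hiso : isometry d h.

Lemma pcontinuous_cone y rho : pcontinuous δ (fun z => 1 - δ z y / rho).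
Proof.
  apply pcontinuous_ext with (fun z => 1 + (- / rho) * δ z y); [intros; unfold Rdiv; ring |].
  apply pcontinuous_plus; [apply pcontinuous_const |].
  apply pcontinuous_scal, pcontinuous_orbit_dist; auto.
Qed.

Lemma cone_nonpos_far y rho z : 0 < rho -> rho <= δ z y -> 1 - δ z y / rho <= 0.
Proof.
  intros Hr Hz. enough (1 <= δ z y / rho) by lra.
  apply Rmult_le_reg_r with rho; auto. unfold Rdiv. rewrite Rmult_assoc, Rinv_l; lra.
Qed.

Lemma pcontinuous_bump y rho : pcontinuous δ (bump y rho).
Proof. apply pcontinuous_max; [apply pcontinuous_const | apply pcontinuous_cone]. Qed.

Lemma bump_range y rho z : 0 < rho -> 0 <= bump y rho z <= 1.
Proof.
  intros Hr. unfold bump. pose proof (orbit_dist_nonneg d h Hd z y).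
  assert (0 <= δ z y / rho) by (apply Rle_mult_inv_pos; lra).
  split; [apply Rmax_l | apply Rmax_lub; lra].
Qed.

Lemma bump_center y rho : bump y rho y = 1.
Proof.
  unfold bump. rewrite orbit_dist_refl; auto. unfold Rdiv.
  rewrite Rmult_0_l, Rminus_0_r. apply Rmax_right. lra.
Qed.

Lemma bump_far y rho z : 0 < rho -> rho <= δ z y -> bump y rho z = 0.
Proof. intros Hr Hz. apply Rmax_left. apply cone_nonpos_far; auto. Qed.

Lemma bump_support y rho z : 0 < rho -> 0 < bump y rho z -> δ z y < rho.
Proof.
  intros Hr Hp. destruct (Rlt_or_le (δ z y) rho) as [H | H]; auto.
  rewrite bump_far in Hp; auto. lra.
Qed.

Lemma pcontinuous_squeeze_width P mu k : pcontinuous δ (squeeze_width P mu k).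
Proof.
  induction P as [|p P IH]; simpl; [apply pcontinuous_const |].
  apply pcontinuous_max; [exact IH | apply pcontinuous_cone].
Qed.

Lemma squeeze_width_ge P mu k z : / 2 ^ S k <= squeeze_width P mu k z.
Proof. induction P as [|p P IH]; simpl; [lra |]. eapply Rle_trans; [apply IH | apply Rmax_l]. Qed.

Lemma squeeze_width_pos P mu k z : 0 < squeeze_width P mu k z.
Proof. eapply Rlt_le_trans; [| apply squeeze_width_ge]. apply Rinv_0_lt_compat, pow_lt. lra. Qed.

Lemma squeeze_width_frozen P mu k p : In p P -> 1 <= squeeze_width P mu k p.
Proof.
  induction P as [|q P IH]; simpl; [intros [] |].
  intros [-> | Hp].
  - eapply Rle_trans; [| apply Rmax_r]. rewrite orbit_dist_refl; auto.
    unfold Rdiv. rewrite Rmult_0_l. lra.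
  - eapply Rle_trans; [apply IH; auto | apply Rmax_l].
Qed.

Lemma squeeze_width_far P mu k z : 0 < mu -> (forall p, In p P -> mu <= δ p z) ->
  squeeze_width P mu k z = / 2 ^ S k.
Proof.
  intros Hmu. induction P as [|q P IH]; simpl; intros HP; [reflexivity |].
  rewrite IH; [| intros p Hp; apply HP; right; auto].
  apply Rmax_left. pose proof (squeeze_width_pos nil mu k z) as Hpos. simpl in Hpos.
  enough (1 - δ z q / mu <= 0) by lra.
  apply cone_nonpos_far; auto. rewrite orbit_dist_sym; auto.
Qed.

Lemma bump_radius_exists a N c s t eta y : wf_approx a -> request_witness a N c s t eta y ->
  exists rho, bump_radius a y s t rho.
Proof.
  intros Ha ((_ & _ & _ & Hyt & Hys) & _ & _ & Hfar).
  destruct (pcontinuous_lt δ (lo a) y t (wf_lo_cont _ Ha) Hyt) as [r1 [Hr1 H1]].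
  destruct (pcontinuous_gt δ (hi a) y s (wf_hi_cont _ Ha) Hys) as [r2 [Hr2 H2]].
  destruct (list_min_pos (fun p => δ p y) (frozen a) (Rmin r1 r2)) as [rho [Hrho [Hle Hfr]]].
  - apply Rmin_pos; auto.
  - intros p Hp. rewrite orbit_dist_sym; auto.
  - exists rho. split; auto. split; auto.
    intros z Hz. pose proof (Rmin_l r1 r2). pose proof (Rmin_r r1 r2).
    split; [apply H1 | apply H2]; rewrite orbit_dist_sym; auto; lra.
Qed.

Lemma serve_cases a m N c i j e : request m = (N, c, i, j, e) -> wf_approx a ->
  (serve a m = a /\
     ~ exists y, request_witness a N c (grid_pt i e) (grid_pt j e) (grid_tol e) y) \/
  (exists y rho, request_witness a N c (grid_pt i e) (grid_pt j e) (grid_tol e) y /\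
     bump_radius a y (grid_pt i e) (grid_pt j e) rho /\
     serve a m = mk_approx
       (fun z => Rmax (lo a z) (grid_pt i e * bump y rho z))
       (fun z => Rmin (hi a z) (1 - (1 - grid_pt j e) * bump y rho z)) (y :: frozen a)).
Proof.
  intros Hm Ha. unfold serve. rewrite Hm.
  destruct (excluded_middle_informative _) as [Hex | Hn]; [right | left; auto].
  set (y := epsilon _ _). set (rho := epsilon _ _).
  assert (Hy : request_witness a N c (grid_pt i e) (grid_pt j e) (grid_tol e) y)
    by (apply epsilon_spec; auto).
  exists y, rho. split; auto. split; auto.
  apply epsilon_spec. eapply bump_radius_exists; eauto.
Qed.

Lemma serve_wf a m : wf_approx a -> wf_approx (serve a m).
Proof.
  intros Ha. destruct (request m) as [[[[N c] i] j] e] eqn:Hm.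
  destruct (serve_cases a m N c i j e Hm Ha)
    as [[-> _] | (y & rho & Hy & (Hr & Hfar & Hnear) & ->)];
    auto.
  destruct Ha as [Hrange Hlo Hhi Hfr]. split; simpl.
  - intros z. destruct (Hrange z) as (Z1 & Z2 & Z3).
    apply bump_order; auto; [apply bump_range; auto | | apply Hy].
    intros Hf. apply Hnear, bump_support; auto.
  - apply pcontinuous_max, pcontinuous_scal, pcontinuous_bump; auto.
  - apply pcontinuous_min; auto.
    apply pcontinuous_ext with (fun z => 1 + (- (1 - grid_pt j e)) * bump y rho z);
      [intros; ring |].
    apply pcontinuous_plus, pcontinuous_scal, pcontinuous_bump; auto. apply pcontinuous_const.
  - intros p [<- | Hp]; [apply Hy | auto].
Qed.

Lemma squeeze_wf a m : wf_approx a -> wf_approx (squeeze a m).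
Proof.
  intros [Hrange Hlo Hhi Hfr]. unfold squeeze. destruct (Cantor.of_nat m) as [n k].
  set (w := squeeze_width _ _ k).
  assert (Hw : pcontinuous δ w) by (apply pcontinuous_squeeze_width; auto).
  split; simpl; auto.
  - intros z. destruct (Hrange z) as (Z1 & Z2 & Z3).
    apply squeeze_order; auto. apply squeeze_width_pos.
  - apply pcontinuous_max; auto.
    apply pcontinuous_ext with (fun z => / 2 * lo a z + (/ 2 * hi a z + (-1) * w z));
      [intros; field |].
    repeat apply pcontinuous_plus; apply pcontinuous_scal; auto.
  - apply pcontinuous_min; auto.
    apply pcontinuous_ext with (fun z => / 2 * lo a z + (/ 2 * hi a z + 1 * w z));
      [intros; field |].
    repeat apply pcontinuous_plus; apply pcontinuous_scal; auto.
Qed.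

Lemma stage_wf m : wf_approx (stage m).
Proof.
  induction m; simpl.
  - split; simpl; [intros; lra | apply pcontinuous_const | apply pcontinuous_const | intros p []].
  - apply squeeze_wf, serve_wf; auto.
Qed.

Lemma serve_mono a m z : wf_approx a -> lo a z <= lo (serve a m) z /\ hi (serve a m) z <= hi a z.
Proof.
  intros Ha. destruct (request m) as [[[[N c] i] j] e] eqn:Hm.
  destruct (serve_cases a m N c i j e Hm Ha) as [[-> _] | (y & rho & _ & _ & ->)]; simpl;
    [lra | split; [apply Rmax_l | apply Rmin_l]].
Qed.

Lemma squeeze_mono a m z : lo a z <= lo (squeeze a m) z /\ hi (squeeze a m) z <= hi a z.
Proof. unfold squeeze. destruct (Cantor.of_nat m). simpl. split; [apply Rmax_l | apply Rmin_l]. Qed.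

Lemma serve_frozen a m p : wf_approx a -> In p (frozen a) ->
  lo (serve a m) p = lo a p /\ hi (serve a m) p = hi a p /\ In p (frozen (serve a m)).
Proof.
  intros Ha Hp. destruct (request m) as [[[[N c] i] j] e] eqn:Hm.
  destruct (serve_cases a m N c i j e Hm Ha) as [[-> _] | (y & rho & _ & (Hr & Hfar & _) & ->)];
    simpl; auto.
  rewrite bump_far; auto. destruct (wf_range _ Ha p) as (Z1 & Z2 & Z3).
  rewrite !Rmult_0_r, Rminus_0_r.
  split; [apply Rmax_left; lra | split; [apply Rmin_left; lra | right; auto]].
Qed.

Lemma squeeze_frozen a m p : wf_approx a -> In p (frozen a) ->
  lo (squeeze a m) p = lo a p /\ hi (squeeze a m) p = hi a p /\ In p (frozen (squeeze a m)).
Proof.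
  intros Ha Hp. unfold squeeze. destruct (Cantor.of_nat m) as [n k]. simpl.
  destruct (wf_range _ Ha p) as (Z1 & Z2 & Z3).
  pose proof (squeeze_width_frozen (frozen a) (epsilon (inhabits 1) (squeeze_gap a n)) k p Hp).
  split; [apply Rmax_left; lra | split; [apply Rmin_left; lra | auto]].
Qed.

Lemma stage_mono m m' z : (m <= m')%nat ->
  lo (stage m) z <= lo (stage m') z /\ hi (stage m') z <= hi (stage m) z.
Proof.
  induction 1 as [| m' _ IH]; [lra |]. simpl. unfold step.
  pose proof (serve_mono (stage m') m' z (stage_wf m')).
  pose proof (squeeze_mono (serve (stage m') m') m' z). lra.
Qed.

Lemma stage_frozen m m' p : (m <= m')%nat -> In p (frozen (stage m)) ->
  lo (stage m') p = lo (stage m) p /\ hi (stage m') p = hi (stage m) p /\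
  In p (frozen (stage m')).
Proof.
  intros Hle Hp. induction Hle as [| m' _ (E1 & E2 & E3)]; auto. simpl. unfold step.
  destruct (serve_frozen (stage m') m' p (stage_wf m') E3) as (F1 & F2 & F3).
  destruct (squeeze_frozen _ m' p (serve_wf _ m' (stage_wf m')) F3) as (G1 & G2 & G3).
  rewrite G1, G2, F1, F2. auto.
Qed.

Lemma stage_lo_lt_hi m m' z : lo (stage m) z < hi (stage m') z.
Proof.
  pose proof (stage_mono m (Nat.max m m') z ltac:(lia)).
  pose proof (stage_mono m' (Nat.max m m') z ltac:(lia)).
  destruct (wf_range _ (stage_wf (Nat.max m m')) z). lra.
Qed.

Hypothesis HKclosed : forall n, mclosed d (K n).
Hypothesis HKinv : forall n x, K n x <-> K n (h x).

Lemma squeeze_on_K a m n k w : wf_approx a -> Cantor.of_nat m = (n, k) -> K n w ->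
  hi (squeeze a m) w - lo (squeeze a m) w <= / 2 ^ k.
Proof.
  intros Ha Hm Hw. unfold squeeze. rewrite Hm. simpl.
  set (mu := epsilon (inhabits 1) (squeeze_gap a n)).
  assert (Hmu : squeeze_gap a n mu).
  { apply epsilon_spec.
    destruct (invariant_closed_orbit_gap_list d h Hd Hiso (K n) (frozen a) (HKclosed n) (HKinv n))
      as [mu' Hmu']; [intros p Hp; apply (wf_frozen _ Ha); auto | eauto]. }
  destruct Hmu as [Hmu0 Hgap]. rewrite squeeze_width_far; auto.
  pose proof (Rmax_r (lo a w) ((lo a w + hi a w) / 2 - / 2 ^ S k)).
  pose proof (Rmin_r (hi a w) ((lo a w + hi a w) / 2 + / 2 ^ S k)).
  simpl in *. assert (2 * / (2 * 2 ^ k) = / 2 ^ k) by (field; apply pow_nonzero; lra). lra.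
Qed.

Lemma stage_gap_on_K n k w : K n w ->
  hi (stage (S (Cantor.to_nat (n, k)))) w - lo (stage (S (Cantor.to_nat (n, k)))) w <= / 2 ^ k.
Proof.
  intros Hw. apply squeeze_on_K with n; auto.
  - apply serve_wf, stage_wf.
  - apply Cantor.cancel_of_to.
Qed.

(** * The limit fence *)

Definition fenceL (z : Cantor) : R := supR (fun v => exists m, v = lo (stage m) z).
Definition fenceU (z : Cantor) : R := infR (fun v => exists m, v = hi (stage m) z).

Lemma stage_lo_le1 m z : lo (stage m) z <= 1.
Proof. destruct (wf_range _ (stage_wf m) z). lra. Qed.

Lemma stage_hi_ge0 m z : 0 <= hi (stage m) z.
Proof. destruct (wf_range _ (stage_wf m) z). lra. Qed.

Lemma fenceL_ge m z : lo (stage m) z <= fenceL z.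
Proof. apply supR_ub with 1; [intros v [m' ->]; apply stage_lo_le1 | eauto]. Qed.

Lemma fenceL_le m z : fenceL z <= hi (stage m) z.
Proof.
  apply supR_least with 1;
    [exists (lo (stage 0) z); eauto | intros v [m' ->]; apply stage_lo_le1 |].
  intros v [m' ->]. left. apply stage_lo_lt_hi.
Qed.

Lemma fenceU_le m z : fenceU z <= hi (stage m) z.
Proof. apply infR_lb with 0; [intros v [m' ->]; apply stage_hi_ge0 | eauto]. Qed.

Lemma fenceL_le_U z : fenceL z <= fenceU z.
Proof.
  apply infR_greatest with 0;
    [exists (hi (stage 0) z); eauto | intros v [m' ->]; apply stage_hi_ge0 |].
  intros v [m' ->]. apply fenceL_le.
Qed.

Lemma fence_admissible : admissible d fenceL fenceU.
Proof.
  assert (Hrange : forall z, 0 <= fenceL z /\ fenceU z <= 1).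
  { intros z. pose proof (fenceL_ge 0 z). pose proof (fenceU_le 0 z). simpl in *. lra. }
  split; [| split; [| split; [| split]]].
  - intros z. pose proof (Hrange z). pose proof (fenceL_le_U z). lra.
  - intros z. pose proof (Hrange z). pose proof (fenceL_le_U z). lra.
  - intros x eps He.
    destruct (supR_approx (fun v => exists m, v = lo (stage m) x) 1 (eps / 2))
      as [v [[m ->] Hv]];
      [exists (lo (stage 0) x); eauto | intros v [m' ->]; apply stage_lo_le1 | lra |].
    destruct (wf_lo_cont _ (stage_wf m) x (eps / 2)) as [r [Hr Hnear]]; [lra |].
    exists r. split; auto. intros y Hy.
    pose proof (orbit_dist_le_d d h Hd x y). specialize (Hnear y ltac:(lra)).
    apply Rabs_def2 in Hnear. pose proof (fenceL_ge m y). fold (fenceL x) in Hv. lra.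
  - intros x eps He.
    destruct (infR_approx (fun v => exists m, v = hi (stage m) x) 0 (eps / 2))
      as [v [[m ->] Hv]];
      [exists (hi (stage 0) x); eauto | intros v [m' ->]; apply stage_hi_ge0 | lra |].
    destruct (wf_hi_cont _ (stage_wf m) x (eps / 2)) as [r [Hr Hnear]]; [lra |].
    exists r. split; auto. intros y Hy.
    pose proof (orbit_dist_le_d d h Hd x y). specialize (Hnear y ltac:(lra)).
    apply Rabs_def2 in Hnear. pose proof (fenceU_le m y). fold (fenceU x) in Hv. lra.
  - apply fenceL_le_U.
Qed.

Lemma fence_shift_invariant z : fenceL (h z) = fenceL z /\ fenceU (h z) = fenceU z.
Proof.
  assert (Hlo : forall m, lo (stage m) (h z) = lo (stage m) z)
    by (intro m; apply (pcontinuous_orbit_invariant d h Hd Hiso), wf_lo_cont, stage_wf).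
  assert (Hhi : forall m, hi (stage m) (h z) = hi (stage m) z)
    by (intro m; apply (pcontinuous_orbit_invariant d h Hd Hiso), wf_hi_cont, stage_wf).
  unfold fenceL, fenceU. split; f_equal; apply functional_extensionality; intro v;
    apply propositional_extensionality; split; intros [m ->]; exists m; auto.
Qed.

Lemma fence_frozen m p : In p (frozen (stage m)) ->
  fenceL p = lo (stage m) p /\ fenceU p = hi (stage m) p.
Proof.
  intros Hp. split; apply Rle_antisym; auto using fenceL_ge, fenceU_le.
  - apply supR_least with 1;
      [exists (lo (stage 0) p); eauto | intros v [m' ->]; apply stage_lo_le1 |].
    intros v [m' ->]. destruct (le_lt_dec m' m); [apply stage_mono; auto |].
    right. apply stage_frozen; auto. lia.
  - apply infR_greatest with 0;
      [exists (hi (stage 0) p); eauto | intros v [m' ->]; apply stage_hi_ge0 |].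
    intros v [m' ->]. destruct (le_lt_dec m' m); [apply stage_mono; auto |].
    right. symmetry. apply stage_frozen; auto. lia.
Qed.

Lemma fence_degenerate_on_K n w : K n w -> fenceL w = fenceU w.
Proof.
  intros Hw. apply Rle_antisym; [apply fenceL_le_U |]. apply Rnot_lt_le. intro Hlt.
  destruct (pow2_inv_small (fenceU w - fenceL w)) as [k Hk]; [lra |].
  pose proof (stage_gap_on_K n k w Hw).
  pose proof (fenceU_le (S (Cantor.to_nat (n, k))) w).
  pose proof (fenceL_ge (S (Cantor.to_nat (n, k))) w). lra.
Qed.

Hypothesis Horb : forall x, nowhere_dense d (orbit h x).
Hypothesis HKnd : forall n, nowhere_dense d (K n).

Lemma in_window_nbhd m N c s t eta z : in_window (stage m) N c s t eta z ->
  nbhd d (in_window (stage m) N c s t eta) z.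
Proof.
  intros (W1 & W2 & W3 & W4 & W5).
  assert (Hlo : pcontinuous d (lo (stage m)))
    by (apply pcontinuous_weaken with δ;
        [apply orbit_dist_le_d; auto | apply wf_lo_cont, stage_wf]).
  assert (Hhi : pcontinuous d (hi (stage m)))
    by (apply pcontinuous_weaken with δ;
        [apply orbit_dist_le_d; auto | apply wf_hi_cont, stage_wf]).
  destruct (ball_in_cylinder d Hd z N) as [r [Hr Hcyl]].
  repeat apply nbhd_and; try apply pcontinuous_lt; try apply pcontinuous_gt; auto.
  exists r. split; auto. intros u Hu. apply agree_trans with z; auto.
Qed.

Lemma request_witness_exists m N c s t eta x : in_window (stage m) N c s t eta x -> s < t ->
  exists y, request_witness (stage m) N c s t eta y.
Proof.
  intros Hx Hst.
  set (F := fun k z => K k z \/ exists p, In p (frozen (stage m)) /\ δ z p = 0).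
  assert (HF : forall k, avoidable d (F k)).
  { intro k. apply avoidable_union;
      [apply avoidable_closed; auto | apply avoidable_orbit_dist0; auto]. }
  destruct (baire_avoid d Hd _ F x (in_window_nbhd m N c s t eta) Hx HF) as [y [Hy HyF]].
  exists y. split; auto. split; auto. split.
  - intros n Hn. apply (HyF n). left; auto.
  - intros p Hp. destruct (orbit_dist_nonneg d h Hd y p) as [H | H]; auto.
    exfalso. apply (HyF 0%nat). right. eauto.
Qed.

Lemma serve_hits m N c i j e : request m = (N, c, i, j, e) ->
  (exists y, request_witness (stage m) N c (grid_pt i e) (grid_pt j e) (grid_tol e) y) ->
  exists y, request_witness (stage m) N c (grid_pt i e) (grid_pt j e) (grid_tol e) y /\
    In y (frozen (stage (S m))) /\
    lo (stage (S m)) y = Rmax (lo (stage m) y) (grid_pt i e) /\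
    hi (stage (S m)) y = Rmin (hi (stage m) y) (grid_pt j e).
Proof.
  intros Hm Hex. pose proof (stage_wf m) as Ha.
  destruct (serve_cases (stage m) m N c i j e Hm Ha) as [[_ Hn] | (y & rho & Hy & Hr & Hserve)];
    [contradiction |].
  exists y. split; auto.
  assert (Hin : In y (frozen (serve (stage m) m))) by (rewrite Hserve; left; auto).
  destruct (squeeze_frozen _ m y (serve_wf _ m Ha) Hin) as (E1 & E2 & E3).
  simpl. unfold step. rewrite E1, E2. split; auto.
  rewrite Hserve. simpl. rewrite bump_center; auto. rewrite Rmult_1_r.
  split; auto. f_equal. ring.
Qed.

Lemma fraisse_request x N c i j e : agree N (cyl_center c) x ->
  let s := grid_pt i e in let t := grid_pt j e in let eta := grid_tol e in
  fenceL x < s + eta -> t - eta < fenceU x -> fenceL x < t -> s < fenceU x -> s < t ->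
  exists y, In y (frozen (stage (S (request_code N c i j e)))) /\ agree N x y /\
    (forall p, In p (frozen (stage (request_code N c i j e))) -> y <> p) /\
    s <= fenceL y < s + eta /\ t - eta < fenceU y <= t /\ fenceL y < fenceU y.
Proof.
  intros Hx s t eta X2 X3 X4 X5 X6. subst s t eta.
  set (m := request_code N c i j e).
  pose proof (fenceL_ge m x). pose proof (fenceU_le m x).
  destruct (request_witness_exists m N c (grid_pt i e) (grid_pt j e) (grid_tol e) x) as [y0 Hy0];
    [repeat split; auto; lra | auto |].
  destruct (serve_hits m N c i j e (request_code_spec N c i j e) (ex_intro _ y0 Hy0))
    as (y & ((Y1 & Y2 & Y3 & Y4 & Y5) & _ & _ & Hfar) & Hin & EL & EU).
  exists y. split; auto.
  split; [apply agree_trans with (cyl_center c); auto; apply agree_sym; auto |].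
  split.
  - intros p Hp <-. specialize (Hfar y Hp). rewrite orbit_dist_refl in Hfar; auto. lra.
  - destruct (fence_frozen (S m) y Hin) as [-> ->]. rewrite EL, EU.
    destruct (wf_range _ (stage_wf (S m)) y) as (_ & Hlt & _). rewrite EL, EU in Hlt.
    pose proof (grid_tol_pos e).
    split; [split; [apply Rmax_r | apply Rmax_lub_lt; lra] |].
    split; [split; [apply Rmin_glb_lt; lra | apply Rmin_r] | auto].
Qed.

(** Requests at depths [N] and [N + 1] are served at different stages, and the point chosen at
    the later stage avoids the frozen ones; so one of the two points differs from [x]. *)
Lemma fraisse_two_points x N i j e :
  let s := grid_pt i e in let t := grid_pt j e in let eta := grid_tol e in
  fenceL x < s + eta -> t - eta < fenceU x -> fenceL x < t -> s < fenceU x -> s < t ->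
  exists y1 y2, y1 <> y2 /\ forall y, y = y1 \/ y = y2 ->
    agree N x y /\ s <= fenceL y < s + eta /\ t - eta < fenceU y <= t /\ fenceL y < fenceU y.
Proof.
  intros s t eta X1 X2 X3 X4 X5.
  destruct (cyl_center_exists N x) as [c1 Hc1]. destruct (cyl_center_exists (S N) x) as [c2 Hc2].
  destruct (fraisse_request x N c1 i j e Hc1) as (y1 & Hin1 & Hag1 & Hnew1 & Hy1); auto.
  destruct (fraisse_request x (S N) c2 i j e Hc2) as (y2 & Hin2 & Hag2 & Hnew2 & Hy2); auto.
  exists y1, y2. split.
  - set (m1 := request_code N c1 i j e) in *. set (m2 := request_code (S N) c2 i j e) in *.
    assert (Hm : m1 <> m2).
    { intro E. assert (HE : request m1 = request m2) by (rewrite E; auto).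
      unfold m1, m2 in HE. rewrite !request_code_spec in HE. injection HE. lia. }
    intros <-. destruct (le_lt_dec m1 m2).
    + apply (Hnew2 y1); auto. apply (stage_frozen (S m1) m2); auto; lia.
    + apply (Hnew1 y1); auto. apply (stage_frozen (S m2) m1); auto; lia.
  - intros y [-> | ->]; split; auto. apply agree_le with (S N); auto.
Qed.

Lemma fraisse_point x s0 t0 eps : fenceL x <= s0 -> s0 <= t0 -> t0 <= fenceU x -> 0 < eps ->
  exists y, y <> x /\ d x y < eps /\ fenceL y < fenceU y /\
    Rabs (fenceL y - s0) < eps /\ Rabs (fenceU y - t0) < eps.
Proof.
  intros Hs0 Hst Ht0 He.
  destruct fence_admissible as (HL & HU & _).
  destruct (pow2_inv_small (Rmin eps 1)) as [e He2]; [apply Rmin_pos; lra |].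
  pose proof (Rmin_l eps 1). pose proof (Rmin_r eps 1). fold (grid_tol e) in He2.
  pose proof (HL x). pose proof (HU x).
  destruct (grid_bracket s0 t0 e) as (i & j & Hi & Hj); try lra.
  destruct (cylinder_in_ball d Hd x eps He) as [N HN].
  destruct (fraisse_two_points x N i j e) as (y1 & y2 & Hne & Hy); try lra.
  assert (Hclose : forall y, y = y1 \/ y = y2 -> d x y < eps /\ fenceL y < fenceU y /\
    Rabs (fenceL y - s0) < eps /\ Rabs (fenceU y - t0) < eps).
  { intros y Hyy. destruct (Hy y Hyy) as (Hag & HLy & HUy & HLU).
    split; [auto | split; [auto | split; apply Rabs_def1; lra]]. }
  destruct (classic (y1 = x)) as [<- | Hx]; [exists y2 | exists y1]; split; auto.
Qed.

Lemma fence_fraisse : fraisse_fence d fenceL fenceU.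
Proof.
  intros x I HI HIx.
  destruct (continuum_interval I HI) as (s0 & t0 & Hst & HIe).
  destruct (HIx s0) as [Hs0 _]; [apply HIe; lra |].
  destruct (HIx t0) as [_ Ht0]; [apply HIe; lra |].
  set (near := fun k y => y <> x /\ d x y < / 2 ^ k /\ fenceL y < fenceU y /\
    Rabs (fenceL y - s0) < / 2 ^ k /\ Rabs (fenceU y - t0) < / 2 ^ k).
  set (xs := fun k => epsilon (inhabits x) (near k)).
  assert (Hnear : forall k, near k (xs k)).
  { intro k. apply epsilon_spec, fraisse_point; auto. apply Rinv_0_lt_compat, pow_lt; lra. }
  assert (Hfiber : hausdorff_cvg (fun k => fiber fenceL fenceU (xs k)) (fun t => s0 <= t <= t0)).
  { apply hausdorff_interval with (fun k => fenceL (xs k)) (fun k => fenceU (xs k)); auto.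
    - intros k. left. apply (Hnear k).
    - intros k y. reflexivity.
    - intros eps He. destruct (pow2_inv_small eps He) as [N HN]. exists N. intros k Hk.
      pose proof (pow2_inv_antitone N k Hk).
      destruct (Hnear k) as (_ & _ & _ & HL & HU). split; lra. }
  exists xs. split; [| split; [| split]].
  - intro k. apply (Hnear k).
  - intros eps He. destruct (pow2_inv_small eps He) as [N HN]. exists N. intros k Hk.
    pose proof (pow2_inv_antitone N k Hk). destruct (Hnear k) as (_ & Hd' & _).
    rewrite (d_sym d Hd). lra.
  - intro k. apply arc_interval, (Hnear k).
  - intros eps He. destruct (Hfiber eps He) as [N HN]. exists N. intros k Hk.
    destruct (HN k Hk) as [H1 H2]. split.
    + intros a Ha. destruct (H1 a Ha) as [b [Hb Hab]]. exists b. split; [apply HIe |]; auto.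
    + intros b Hb. apply HIe in Hb. auto.
Qed.

Hypothesis Hh : homeomorphism d h.

Lemma fence_good : good_fence d h fenceL fenceU.
Proof.
  split; [apply fence_admissible | split; [apply fence_fraisse |]].
  exists (fence_lift fenceL fenceU h fence_shift_invariant).
  split; [apply fence_lift_homeomorphism; auto |].
  split; [apply fence_lift_isometry; auto |].
  apply fence_projection_factor, fenceL_le_U.
Qed.

End Construction.

Theorem theorem6p4 (d : Cantor -> Cantor -> R) (h : Cantor -> Cantor) :
  compatible_metric d ->
  homeomorphism d h -> isometry d h ->
  (forall x, nowhere_dense d (orbit h x)) ->
  (exists phiL phiU : Cantor -> R, good_fence d h phiL phiU) /\
  (forall K : nat -> Cantor -> Prop,
     (forall n, mclosed d (K n)) ->
     (forall n x, K n x <-> K n (h x)) ->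
     (forall n, nowhere_dense d (K n)) ->
     exists phiL phiU : Cantor -> R, good_fence d h phiL phiU /\
       (forall x, (exists n, K n x) -> phiL x = phiU x)).
Proof.
  intros Hd Hh Hiso Horb.
  assert (Hfences : forall K : nat -> Cantor -> Prop,
     (forall n, mclosed d (K n)) -> (forall n x, K n x <-> K n (h x)) ->
     (forall n, nowhere_dense d (K n)) ->
     exists phiL phiU, good_fence d h phiL phiU /\
       (forall x, (exists n, K n x) -> phiL x = phiU x)).
  { intros K HKclosed HKinv HKnd. exists (fenceL d h K), (fenceU d h K). split.
    - apply fence_good; auto.
    - intros x [n Hn]. apply (fence_degenerate_on_K d h K Hd Hiso HKclosed HKinv n x Hn). }
  split; auto.
  destruct (Hfences (fun _ _ => False)) as (phiL & phiU & Hgood & _); [| | | eauto].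
  - intros n x Hx. destruct (Hx 1) as [y [[] _]]. lra.
  - intros n x. tauto.
  - intros n x [eps [He Hin]].
    destruct (Hin x ltac:(rewrite (d_refl d Hd); auto) 1) as [y [[] _]]. lra.
Qed.
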